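(* Assume Conditions (A), (P) and (Ah) from the context. Then (i) $\|A_hP_hA^{-1}\|_{\mathcal L(H)}\le C$ and (ii) $\|A_{h,\ell}A_h^{-1}P_h\|_{\mathcal L(H)}\le C$ for $\ell\in\{1,2\}$, with $C$ independent of $h$.
   Context: $(H,(\cdot,\cdot)_H,\|\cdot\|_H)$ is a real Hilbert space with complexification $H_{\mathbb C}$; $C$ denotes generic constants independent of $h$. Condition (A): $A:\mathrm{dom}(A)\subset H\to H$ and $A_\ell:\mathrm{dom}(A_\ell)\subset H\to H$ ($\ell=1,2$) are linear with $A=A_1+A_2$ on $\mathrm{dom}(A_1)\cap\mathrm{dom}(A_2)\subseteq\mathrm{dom}(A)$; $A$ is densely defined, positive and sectorial: there is $\varphi\in(0,\pi/2)$ such that $0$ and $S_\varphi=\{\lambda\in\mathbb C:\varphi<|\arg\lambda|\le\pi\}$ lie in the resolvent set and $\|(A-\lambda I)^{-1}\|_{\mathcal L(H_{\mathbb C})}\le C/|\lambda|$ on $S_\varphi$; $A_\ell A^{-1}$ is a well-defined bounded operator on $H$. Condition (P): $V_h\subset H$ ($h\in I\subset(0,\infty)$) are finite-dimensional subspaces and $P_h:H\to V_h$ bounded projections with $\|(I-P_h)v\|_H\le Ch^2\|Av\|_H$ for $v\in\mathrm{dom}(A)$. Condition (Ah): $V_h$ carries an inner product with norm $\|\cdot\|_{V_h}$, $\|v_h\|_H\le C\|v_h\|_{V_h}$, and $A_h,A_{h,1},A_{h,2}\in\mathcal L(V_h)$ satisfy for all $v_h,w_h\in V_h$, $\ell=1,2$: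 (a) $(A_hv_h,v_h)_H\ge C\|v_h\|^2_{V_h}$; (b) $|(A_hv_h,w_h)_H|\le C\|v_h\|_{V_h}\|w_h\|_{V_h}$; (c) $A_h=A_{h,1}+A_{h,2}$; (d) $(A_{h,\ell}v_h,v_h)_H\ge0$; (e) $\|A_{h,\ell}P_h\|_{\mathcal L(H)}\le Ch^{-2}$; (f) $\|(P_hA_\ell-A_{h,\ell}P_h)v\|_H\le C\|Av\|_H$ for $v\in\mathrm{dom}(A)$; (g) $\|A^{-1}-A_h^{-1}P_h\|_{\mathcal L(H)}\le Ch^2$. Operators on $V_h$ composed with $P_h$ are regarded as operators on $H$; $\|\cdot\|_{\mathcal L(H)}$ is the operator norm with respect to $\|\cdot\|_H$. *)

From HB Require Import structures.
From mathcomp Require Import all_boot all_order all_algebra.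
From mathcomp Require Import all_classical all_reals.
From mathcomp Require Import topology normedtype trigo.
Set Implicit Arguments. Unset Strict Implicit. Unset Printing Implicit Defensive.
Import Order.TTheory GRing.Theory Num.Theory.
Import numFieldNormedType.Exports.
Local Open Scope classical_set_scope.
Local Open Scope ring_scope.

Definition inner_product {R : realType} {H : normedModType R} (ip : H -> H -> R) :=
  [/\ forall (a : R) (x y z : H), ip (a *: x + y) z = a * ip x z + ip y z,
      forall x y, ip x y = ip y x &
      forall x, ip x x = `|x| ^+ 2].

Definition subspace {R : realType} {H : normedModType R} (D : set H) :=
  D 0 /\ forall (a : R) x y, D x -> D y -> D (a *: x + y).

(* T is a linear operator with domain D (values outside D are irrelevant) *)
Definition lin_on {R : realType} {H : normedModType R} (D : set H) (T : H -> H) :=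
  subspace D /\ forall (a : R) x y, D x -> D y -> T (a *: x + y) = a *: T x + T y.

Definition fin_dim_subspace {R : realType} {H : normedModType R} (V : set H) :=
  subspace V /\ exists s : seq H,
    forall x, V x <-> exists c : 'I_(size s) -> R, x = \sum_(i < size s) c i *: nth 0 s i.

Definition bounded_op {R : realType} {H : normedModType R} (T : H -> H) :=
  exists C : R, forall x, `|T x| <= C * `|x|.

(* the inverse of T : D -> (codomain), chosen classically; it is the genuine
   inverse whenever T is a bijection from D onto the whole space *)
Definition inv_on {T : choiceType} (x0 : T) (D : set T) (f : T -> T) (y : T) : T :=
  xget x0 [set x | D x /\ f x = y].

(* ---- complexification H_C = H + iH, represented as pairs (u, w) = u + i w ---- *)
Definition normC {R : realType} {H : normedModType R} (p : H * H) : R :=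
  Num.sqrt (`|p.1| ^+ 2 + `|p.2| ^+ 2).

Definition domC {R : realType} {H : normedModType R} (D : set H) : set (H * H) :=
  [set p | D p.1 /\ D p.2].

(* A_C - lambda I with lambda = a + i b *)
Definition shiftC {R : realType} {H : normedModType R} (A : H -> H) (a b : R)
  (p : H * H) : H * H :=
  (A p.1 - a *: p.1 + b *: p.2, A p.2 - a *: p.2 - b *: p.1).

Definition in_resolventC {R : realType} {H : normedModType R} (D : set H) (A : H -> H)
  (a b : R) :=
  [/\ forall y, exists x, domC D x /\ shiftC A a b x = y,
      forall x y, domC D x -> domC D y -> shiftC A a b x = shiftC A a b y -> x = y &
      exists C : R, forall y,
        normC (inv_on (0, 0) (domC D) (shiftC A a b) y) <= C * normC y].

(* lambda = a + i b lies in S_phi = {phi < |arg lambda| <= pi} *)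
Definition sector {R : realType} (phi a b : R) :=
  (a, b) <> (0, 0) /\ a < cos phi * Num.sqrt (a ^+ 2 + b ^+ 2).

Definition condA {R : realType} {H : completeNormedModType R} (ip : H -> H -> R)
  (domA : set H) (A : H -> H) (dom1 : set H) (A1 : H -> H) (dom2 : set H) (A2 : H -> H) :=
  lin_on domA A /\ lin_on dom1 A1 /\ lin_on dom2 A2 /\
      (forall x, dom1 x -> dom2 x -> domA x /\ A x = A1 x + A2 x) /\
      closure domA = setT /\
      (forall v, domA v -> 0 <= ip (A v) v) /\
      in_resolventC domA A 0 0 /\
      (exists phi : R, [/\ 0 < phi, phi < pi / 2 &
         exists C : R, forall a b, sector phi a b ->
           in_resolventC domA A a b /\
           forall y, normC (inv_on (0, 0) (domC domA) (shiftC A a b) y)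
                     <= C / Num.sqrt (a ^+ 2 + b ^+ 2) * normC y]) /\
      ((forall f, dom1 (inv_on 0 domA A f)) /\ bounded_op (fun f => A1 (inv_on 0 domA A f)) /\
       (forall f, dom2 (inv_on 0 domA A f)) /\ bounded_op (fun f => A2 (inv_on 0 domA A f))).

Definition condP {R : realType} {H : completeNormedModType R}
  (domA : set H) (A : H -> H) (I : set R) (V : R -> set H) (P : R -> H -> H) :=
  [/\ (forall h, I h -> 0 < h),
      (forall h, I h -> fin_dim_subspace (V h)),
      (forall h, I h -> [/\ lin_on setT (P h), (forall x, V h (P h x)),
                            (forall v, V h v -> P h v = v) & bounded_op (P h)]) &
      exists C : R, forall h, I h -> forall v, domA v ->
        `|v - P h v| <= C * h ^+ 2 * `|A v|].

Definition normV {R : realType} {H : normedModType R} (ipV : H -> H -> R) (v : H) : R :=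
  Num.sqrt (ipV v v).

Definition inner_product_on {R : realType} {H : normedModType R} (V : set H)
  (ipV : H -> H -> R) :=
  [/\ forall (a : R) x y z, V x -> V y -> V z -> ipV (a *: x + y) z = a * ipV x z + ipV y z,
      forall x y, V x -> V y -> ipV x y = ipV y x,
      forall x, V x -> 0 <= ipV x x &
      forall x, V x -> ipV x x = 0 -> x = 0].

Definition op_on {R : realType} {H : normedModType R} (V : set H) (T : H -> H) :=
  lin_on V T /\ forall v, V v -> V (T v).

Definition condAh {R : realType} {H : completeNormedModType R} (ip : H -> H -> R)
  (domA : set H) (A : H -> H) (A1 : H -> H) (A2 : H -> H)
  (I : set R) (V : R -> set H) (P : R -> H -> H) (ipV : R -> H -> H -> R)
  (Ah A1h A2h : R -> H -> H) :=
  (forall h, I h -> inner_product_on (V h) (ipV h)) /\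
      (exists C : R, forall h, I h -> forall v, V h v -> `|v| <= C * normV (ipV h) v) /\
      (forall h, I h -> [/\ op_on (V h) (Ah h), op_on (V h) (A1h h) & op_on (V h) (A2h h)]) /\
      (* (a) *)
      (exists2 C : R, 0 < C & forall h, I h -> forall v, V h v ->
         C * normV (ipV h) v ^+ 2 <= ip (Ah h v) v) /\
      (* (b) *)
      (exists C : R, forall h, I h -> forall v w, V h v -> V h w ->
         `|ip (Ah h v) w| <= C * normV (ipV h) v * normV (ipV h) w) /\
      (forall h, I h -> forall v, V h v -> Ah h v = A1h h v + A2h h v) /\
      (forall h, I h -> forall v, V h v -> 0 <= ip (A1h h v) v /\ 0 <= ip (A2h h v) v) /\
      (* (e) *)
      (exists C : R, forall h, I h -> forall x,
         `|A1h h (P h x)| <= C / h ^+ 2 * `|x| /\ `|A2h h (P h x)| <= C / h ^+ 2 * `|x|) /\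
      (* (f) *)
      (exists C : R, forall h, I h -> forall v, domA v ->
         `|P h (A1 v) - A1h h (P h v)| <= C * `|A v| /\
         `|P h (A2 v) - A2h h (P h v)| <= C * `|A v|) /\
      (* (g) *)
      (exists C : R, forall h, I h -> forall x,
         `|inv_on 0 domA A x - inv_on 0 (V h) (Ah h) (P h x)| <= C * h ^+ 2 * `|x|).

From HB Require Import structures.
From mathcomp Require Import all_boot all_order all_algebra.
From mathcomp Require Import all_classical all_reals.
From mathcomp Require Import topology normedtype trigo.
From mathcomp Require Import ring lra.
Set Implicit Arguments. Unset Strict Implicit. Unset Printing Implicit Defensive.
Import Order.TTheory GRing.Theory Num.Theory.
Import numFieldNormedType.Exports.
Local Open Scope classical_set_scope.
Local Open Scope ring_scope.

(* The crux is a uniform bound on P_h.  Test P_h on y = (A + h^-2) r: the sectorial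
   resolvent estimate gives h^-2 |r| + |A r| <= C |y|, the approximation property (P)
   controls h^-2 P_h r, and consistency (f) together with the inverse estimate (e)
   controls P_h A_l r.  Then A_{h,l} P_h A^-1 = P_h A_l A^-1 - (P_h A_l - A_{h,l} P_h) A^-1
   is bounded, which gives (i) through A_h = A_{h,1} + A_{h,2}.  For (ii) write
   A_h^-1 P_h = P_h A^-1 + P_h (A_h^-1 P_h - A^-1): on the second term (e) loses h^-2
   and (g) gains h^2. *)

Lemma inv_onP (T : choiceType) (x0 : T) (D : set T) (f : T -> T) (y : T) :
  (exists2 x, D x & f x = y) -> D (inv_on x0 D f y) /\ f (inv_on x0 D f y) = y.
Proof. by case=> x Dx fx; apply: (@xgetPex _ x0 [set x | D x /\ f x = y]); exists x. Qed.

Lemma inv_on_dom (T : choiceType) (x0 : T) (D : set T) (f : T -> T) (y : T) :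
  D x0 -> D (inv_on x0 D f y).
Proof. by move=> D0; rewrite /inv_on; case: xgetP => [? _ []|]. Qed.

Lemma inv_onK (T : choiceType) (x0 : T) (D : set T) (f : T -> T) (x : T) :
  (forall y z, D y -> D z -> f y = f z -> y = z) -> D x -> inv_on x0 D f (f x) = x.
Proof.
by move=> f_inj Dx; apply: xget_unique => // y [Dy fy]; apply: f_inj.
Qed.

Lemma ler_norm_dist (R : numDomainType) (V : normedZmodType R) (a b : V) :
  `|a| <= `|b| + `|a - b|.
Proof. by rewrite -lerBlDl lerB_dist. Qed.

Lemma ler_norm_coef (R : realDomainType) (a C b : R) :
  0 <= b -> a <= C * b -> a <= `|C| * b.
Proof. by move=> b_ge0 /le_trans; apply; rewrite ler_wpM2r // ler_norm. Qed.

Lemma ler_norm_coef2 (R : realDomainType) (a C b c : R) :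
  0 <= b -> 0 <= c -> a <= C * b * c -> a <= `|C| * b * c.
Proof. by move=> b_ge0 c_ge0; rewrite -!mulrA; apply/ler_norm_coef/mulr_ge0. Qed.

Lemma lin_onD (R : realType) (H : normedModType R) (D : set H) (T : H -> H) (x y : H) :
  lin_on D T -> D x -> D y -> T (x + y) = T x + T y.
Proof. by case=> _ linT Dx Dy; have := linT 1 x y Dx Dy; rewrite !scale1r. Qed.

Section Resolvent.
Variables (R : realType) (H : normedModType R) (D : set H) (A : H -> H).

Lemma normC_real (x : H) : normC (x, 0) = `|x|.
Proof. by rewrite /normC /= normr0 expr0n addr0 sqrtr_sqr normr_id. Qed.

Lemma normC_ge_fst (p : H * H) : `|p.1| <= normC p.
Proof.
rewrite -[leLHS]normr_id -sqrtr_sqr; apply: ler_wsqrtr.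
by rewrite lerDl sqr_ge0.
Qed.

Lemma shiftC00 (p : H * H) : shiftC A 0 0 p = (A p.1, A p.2).
Proof. by rewrite /shiftC !scale0r !subr0 !addr0. Qed.

Hypotheses (linA : lin_on D A) (A_invertible : in_resolventC D A 0 0).

Lemma resolvent0_inj x y : D x -> D y -> A x = A y -> x = y.
Proof.
case: linA => -[D0 _] _ Dx Dy Axy; case: A_invertible => _ A_inj _.
have := A_inj (x, 0) (y, 0); rewrite !shiftC00 /= Axy.
by move=> /(_ (conj Dx D0) (conj Dy D0) erefl) [].
Qed.

Lemma resolvent0_inv_onP x : D (inv_on 0 D A x) /\ A (inv_on 0 D A x) = x.
Proof.
apply: inv_onP; case: A_invertible => /(_ (x, 0)) [p [[Dp _]]] + _ _.
by rewrite shiftC00 => -[Ap _]; exists p.1.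
Qed.

Lemma resolvent0_inv_onK v : D v -> inv_on 0 D A (A v) = v.
Proof. exact/inv_onK/resolvent0_inj. Qed.

Lemma rel_bound_of_inv (T : H -> H) :
  bounded_op (fun f => T (inv_on 0 D A f)) ->
  exists2 K, 0 <= K & forall v, D v -> `|T v| <= K * `|A v|.
Proof.
case=> C TAinv_bound; exists `|C| => // v Dv.
by rewrite -{1}(resolvent0_inv_onK Dv); exact: ler_norm_coef.
Qed.

Lemma split_on_dom (D1 D2 : set H) (A1 A2 : H -> H) :
  (forall x, D1 x -> D2 x -> D x /\ A x = A1 x + A2 x) ->
  (forall f, D1 (inv_on 0 D A f)) -> (forall f, D2 (inv_on 0 D A f)) ->
  forall v, D v -> A v = A1 v + A2 v.
Proof.
move=> A_sum D1_inv D2_inv v Dv; rewrite -(resolvent0_inv_onK Dv).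
by case: (A_sum _ (D1_inv (A v)) (D2_inv (A v))).
Qed.

End Resolvent.

Lemma sector_neg_real (R : realType) (phi mu : R) :
  0 < phi -> phi < pi / 2 -> 0 < mu -> sector phi (- mu) 0.
Proof.
move=> phi_gt0 phi_lt mu_gt0; split.
  by case=> /eqP; rewrite oppr_eq0 gt_eqF.
have cos_gt0 : 0 < cos phi.
  apply: cos_gt0_pihalf; rewrite phi_lt andbT.
  by apply: lt_trans phi_gt0; rewrite oppr_lt0 divr_gt0 // pi_gt0.
rewrite expr0n /= addr0 sqrtr_sqr normrN gtr0_norm //.
by rewrite (lt_le_trans _ (mulr_ge0 (ltW cos_gt0) (ltW mu_gt0))) // oppr_lt0.
Qed.

Lemma resolvent_neg_real (R : realType) (H : normedModType R) (D : set H) (A : H -> H)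
  (phi C : R) :
  0 < phi -> phi < pi / 2 ->
  (forall a b, sector phi a b ->
     in_resolventC D A a b /\
     forall y, normC (inv_on (0, 0) (domC D) (shiftC A a b) y)
               <= C / Num.sqrt (a ^+ 2 + b ^+ 2) * normC y) ->
  forall mu, 0 < mu -> forall y,
    exists2 r, D r & A r + mu *: r = y /\ `|r| <= `|C| / mu * `|y|.
Proof.
move=> phi_gt0 phi_lt sector_bound mu mu_gt0 y.
have [[A_surj _ _] res_bound] := sector_bound _ _ (sector_neg_real phi_gt0 phi_lt mu_gt0).
pose q := inv_on (0, 0) (domC D) (shiftC A (- mu) 0) (y, 0).
have [[Dq _] [Aq _]] : domC D q /\ shiftC A (- mu) 0 q = (y, 0).
  by apply: inv_onP; have [p [Dp Ap]] := A_surj (y, 0); exists p.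
exists q.1 => //; split; first by rewrite -Aq scale0r addr0 scaleNr opprK.
apply: le_trans (normC_ge_fst q) _; apply: le_trans (res_bound (y, 0)) _.
rewrite normC_real expr0n /= addr0 sqrtr_sqr normrN gtr0_norm //.
by rewrite -!mulrA ler_wpM2r ?ler_norm // mulr_ge0 // invr_ge0 ltW.
Qed.

Section FixedMesh.
Variables (R : realType) (H : normedModType R).
Variables (domA : set H) (A A1 A2 : H -> H).
Variables (h : R) (V : set H) (P Ah A1h A2h : H -> H).
Variables (Kr Kp Ke Kf K1 K2 Kg : R).
Hypotheses (h_gt0 : 0 < h) (Kr_ge0 : 0 <= Kr) (Kp_ge0 : 0 <= Kp) (Ke_ge0 : 0 <= Ke)
  (Kf_ge0 : 0 <= Kf) (K1_ge0 : 0 <= K1) (K2_ge0 : 0 <= K2) (Kg_ge0 : 0 <= Kg).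
Hypothesis linP : lin_on setT P.
Hypothesis A_split : forall v, domA v -> A v = A1 v + A2 v.
Hypothesis resolvent_bound : forall mu, 0 < mu -> forall y,
  exists2 r, domA r & A r + mu *: r = y /\ `|r| <= Kr / mu * `|y|.
Hypothesis P_approx : forall v, domA v -> `|v - P v| <= Kp * h ^+ 2 * `|A v|.
Hypotheses (A1h_P_bound : forall x, `|A1h (P x)| <= Ke / h ^+ 2 * `|x|)
  (A2h_P_bound : forall x, `|A2h (P x)| <= Ke / h ^+ 2 * `|x|).
Hypotheses (A1_consistent : forall v, domA v -> `|P (A1 v) - A1h (P v)| <= Kf * `|A v|)
  (A2_consistent : forall v, domA v -> `|P (A2 v) - A2h (P v)| <= Kf * `|A v|).

Definition proj_bound := (1 + 2 * Ke) * Kr + (Kp + 2 * Kf) * (1 + Kr).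

Lemma proj_bound_ge0 : 0 <= proj_bound.
Proof. by rewrite addr_ge0 // !mulr_ge0 // ?addr_ge0 // mulr_ge0. Qed.

Lemma proj_uniform_bound y : `|P y| <= proj_bound * `|y|.
Proof.
have h2_gt0 : 0 < h ^+ 2 by rewrite exprn_gt0.
set mu := (h ^+ 2)^-1; have mu_gt0 : 0 < mu by rewrite invr_gt0.
have [r Dr [Ar r_le]] := resolvent_bound mu_gt0 y.
have mu_r : mu * `|r| <= Kr * `|y|.
  apply: le_trans (ler_wpM2l (ltW mu_gt0) r_le) _.
  by rewrite mulrA mulrCA mulfV ?gt_eqF // mulr1.
have Ar_le : `|A r| <= (1 + Kr) * `|y|.
  rewrite -[A r](addrK (mu *: r)) Ar mulrDl mul1r.
  by rewrite (le_trans (ler_normB _ _)) // normrZ gtr0_norm // lerD2l.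
have Pr_le : mu * `|P r| <= mu * `|r| + Kp * `|A r|.
  have := ler_norm_dist (P r) r; rewrite distrC => Pr_tri.
  apply: le_trans (ler_wpM2l (ltW mu_gt0) (le_trans Pr_tri (lerD (lexx _) (P_approx Dr)))) _.
  by rewrite mulrDr lerD2l mulrA mulrCA /mu mulVf ?gt_eqF // mulr1.
have PAl_le T Th : `|P (T r) - Th (P r)| <= Kf * `|A r| ->
    (forall x, `|Th (P x)| <= Ke / h ^+ 2 * `|x|) ->
    `|P (T r)| <= Ke * (mu * `|r|) + Kf * `|A r|.
  move=> consistent Th_bound; rewrite mulrA.
  exact: le_trans (ler_norm_dist _ (Th (P r))) (lerD (Th_bound r) consistent).
have PA1 := PAl_le _ _ (A1_consistent Dr) A1h_P_bound.
have PA2 := PAl_le _ _ (A2_consistent Dr) A2h_P_bound.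
have -> : P y = mu *: P r + (P (A1 r) + P (A2 r)).
  case: linP => _ linP'; rewrite -Ar A_split // addrC linP' //.
  by rewrite (lin_onD linP).
apply: le_trans (ler_normD _ _) _; rewrite normrZ gtr0_norm //.
apply: le_trans (lerD (lexx _) (ler_normD _ _)) _.
have := ler_wpM2l (mulr_ge0 Ke_ge0 (ler0n _ 2)) mu_r.
have := ler_wpM2l (addr_ge0 Kp_ge0 (mulr_ge0 (ler0n _ 2) Kf_ge0)) Ar_le.
rewrite /proj_bound; lra.
Qed.

Lemma proj_op_bound (T Th : H -> H) (KT : R) :
  (forall v, domA v -> `|T v| <= KT * `|A v|) ->
  (forall v, domA v -> `|P (T v) - Th (P v)| <= Kf * `|A v|) ->
  forall v, domA v -> `|Th (P v)| <= (proj_bound * KT + Kf) * `|A v|.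
Proof.
move=> T_bound consistent v Dv.
apply: le_trans (ler_norm_dist _ (P (T v))) _; rewrite distrC mulrDl.
apply: lerD (consistent v Dv); apply: le_trans (proj_uniform_bound _) _.
by rewrite -mulrA ler_wpM2l ?proj_bound_ge0 ?T_bound.
Qed.

Hypotheses (A1_rel_bound : forall v, domA v -> `|A1 v| <= K1 * `|A v|)
  (A2_rel_bound : forall v, domA v -> `|A2 v| <= K2 * `|A v|).
Hypotheses (P_range : forall x, V (P x)) (P_id : forall v, V v -> P v = v).
Hypotheses (linA1h : lin_on V A1h) (linA2h : lin_on V A2h).
Hypothesis Ah_split : forall v, V v -> Ah v = A1h v + A2h v.

Lemma Ah_proj_bound v : domA v ->
  `|Ah (P v)| <= (proj_bound * (K1 + K2) + 2 * Kf) * `|A v|.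
Proof.
move=> Dv; rewrite Ah_split //; apply: le_trans (ler_normD _ _) _.
have := proj_op_bound A1_rel_bound A1_consistent Dv.
have := proj_op_bound A2_rel_bound A2_consistent Dv.
lra.
Qed.

Lemma near_op_bound (T Th : H -> H) (KT : R) :
  lin_on V Th -> (forall x, `|Th (P x)| <= Ke / h ^+ 2 * `|x|) ->
  (forall v, domA v -> `|T v| <= KT * `|A v|) ->
  (forall v, domA v -> `|P (T v) - Th (P v)| <= Kf * `|A v|) ->
  forall v w, domA v -> V w -> `|w - v| <= Kg * h ^+ 2 * `|A v| ->
  `|Th w| <= (Ke * Kg + (proj_bound * KT + Kf)) * `|A v|.
Proof.
move=> linTh Th_P_bound T_bound consistent v w Dv Vw w_near.
have -> : Th w = Th (P (w - v)) + Th (P v).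
  by rewrite -(lin_onD linTh) ?P_range // -(lin_onD linP) // subrK P_id.
rewrite mulrDl; apply: le_trans (ler_normD _ _) (lerD _ (proj_op_bound T_bound consistent Dv)).
apply: le_trans (Th_P_bound _) _; apply: le_trans (ler_wpM2l _ w_near) _.
  by rewrite divr_ge0 // sqr_ge0.
by rewrite [leLHS](_ : _ = Ke * Kg * `|A v|) //; field; rewrite gt_eqF.
Qed.

Definition mesh_bound := proj_bound * (K1 + K2) + 2 * Kf + Ke * Kg.

Lemma mesh_bounds v w : domA v -> V w -> `|w - v| <= Kg * h ^+ 2 * `|A v| ->
  [/\ `|Ah (P v)| <= mesh_bound * `|A v|, `|A1h w| <= mesh_bound * `|A v|
    & `|A2h w| <= mesh_bound * `|A v|].
Proof.
move=> Dv Vw w_near; have le_mesh c : c <= mesh_bound -> c * `|A v| <= mesh_bound * `|A v|.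
  exact: ler_wpM2r.
have KP_ge0 := proj_bound_ge0.
have KPK1 : 0 <= proj_bound * K1 by rewrite mulr_ge0.
have KPK2 : 0 <= proj_bound * K2 by rewrite mulr_ge0.
have KeKg : 0 <= Ke * Kg by rewrite mulr_ge0.
split; [apply: le_trans (Ah_proj_bound Dv) _
       | apply: le_trans (near_op_bound linA1h A1h_P_bound A1_rel_bound A1_consistent
                            Dv Vw w_near) _
       | apply: le_trans (near_op_bound linA2h A2h_P_bound A2_rel_bound A2_consistent
                            Dv Vw w_near) _];
  by apply: le_mesh; rewrite /mesh_bound; have := Kf_ge0; lra.
Qed.

End FixedMesh.

Theorem lemma4p1 (R : realType) (H : completeNormedModType R) (ip : H -> H -> R)
  (domA : set H) (A : H -> H) (dom1 : set H) (A1 : H -> H) (dom2 : set H) (A2 : H -> H)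
  (I : set R) (V : R -> set H) (P : R -> H -> H) (ipV : R -> H -> H -> R)
  (Ah A1h A2h : R -> H -> H) :
  inner_product ip ->
  condA ip domA A dom1 A1 dom2 A2 ->
  condP domA A I V P ->
  condAh ip domA A A1 A2 I V P ipV Ah A1h A2h ->
  exists C : R, forall h, I h -> forall x : H,
    [/\ `|Ah h (P h (inv_on 0 domA A x))| <= C * `|x|,
        `|A1h h (inv_on 0 (V h) (Ah h) (P h x))| <= C * `|x| &
        `|A2h h (inv_on 0 (V h) (Ah h) (P h x))| <= C * `|x|].
Proof.
move=> _ [linA [_ [_ [A_sum [_ [_ [A_inv [[phi [phi_gt0 phi_lt [Cs sector_bound]]]
  [A1_dom [A1_bounded [A2_dom A2_bounded]]]]]]]]]]].
move=> [h_gt0 _ P_props [Cp P_approx]].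
move=> [_ [_ [Vh_ops [_ [_ [Ah_split [_ [[Ce inv_estimate] [[Cf consistent] [Cg Ah_inv_approx]]]]]]]]]].
have A_split := split_on_dom linA A_inv A_sum A1_dom A2_dom.
have [K1 K1_ge0 A1_rel] := rel_bound_of_inv linA A_inv A1_bounded.
have [K2 K2_ge0 A2_rel] := rel_bound_of_inv linA A_inv A2_bounded.
exists (mesh_bound `|Cs| `|Cp| `|Ce| `|Cf| K1 K2 `|Cg|) => h hI x.
have [linPh P_range P_id _] := P_props h hI.
have [[[[V0 _] _] _] [linA1h _] [linA2h _]] := Vh_ops h hI.
have [Dv Av] := resolvent0_inv_onP A_inv x.
have h2inv_ge0 : 0 <= (h ^+ 2)^-1 by rewrite invr_ge0 sqr_ge0.
have := mesh_bounds (h_gt0 h hI) (normr_ge0 Cs) (normr_ge0 Cp) (normr_ge0 Ce)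
  (normr_ge0 Cf) K1_ge0 K2_ge0 (normr_ge0 Cg) linPh A_split
  (resolvent_neg_real phi_gt0 phi_lt sector_bound)
  (fun v Dv => ler_norm_coef2 (sqr_ge0 h) (normr_ge0 _) (P_approx h hI v Dv))
  (fun y => ler_norm_coef2 h2inv_ge0 (normr_ge0 _) (inv_estimate h hI y).1)
  (fun y => ler_norm_coef2 h2inv_ge0 (normr_ge0 _) (inv_estimate h hI y).2)
  (fun v Dv => ler_norm_coef (normr_ge0 _) (consistent h hI v Dv).1)
  (fun v Dv => ler_norm_coef (normr_ge0 _) (consistent h hI v Dv).2)
  A1_rel A2_rel P_range P_id linA1h linA2h (Ah_split h hI) Dv (inv_on_dom _ _ V0).
rewrite Av; apply; rewrite distrC.
exact: ler_norm_coef2 (sqr_ge0 h) (normr_ge0 _) (Ah_inv_approx h hI x).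
Qed.
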